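(* Let $\mathcal M$ be a finite polyptych lattice over $F$. The product $\star$ on $\langle\mathcal M\rangle$ (defined below) is associative and commutative; in particular $(m_1\star m_2)\star m_3=m_1\star(m_2\star m_3)$ in $\langle\mathcal M\rangle$ for all $m_1,m_2,m_3\in\mathcal M$.
   Context: Fix a subring $F$ with $\mathbb Z\subseteq F\subseteq\mathbb R$. A polyptych lattice of rank $r$ over $F$ is a collection $\{M_\alpha\}_{\alpha\in I}$ of free $F$-modules of rank $r$ with piecewise $F$-linear maps (continuous and $F$-linear on each cone of some complete $F$-rational fan) $\mu_{\alpha,\beta}:M_\alpha\to M_\beta$ with $\mu_{\alpha,\alpha}=\mathrm{id}$, $\mu_{\alpha,\beta}=\mu_{\beta,\alpha}^{-1}$, $\mu_{\beta,\gamma}\circ\mu_{\alpha,\beta}=\mu_{\alpha,\gamma}$; finite if $I$ is finite. Elements are classes of $\bigsqcup M_\alpha$ under $m_\alpha\sim\mu_{\alpha,\beta}(m_\alpha)$; $\pi_\alpha$ the chart maps; $\mathcal M_{\mathbb R}$ has charts $M_\alpha\otimes\mathbb R$; $m+_\alpha m':=\pi_\alpha^{-1}(\pi_\alpha(m)+\pi_\alpha(m'))$; $\lambda m:=\pi_\alpha^{-1}(\lambda\pi_\alpha(m))$ ($\lambda\ge0$). A point is $p:\mathcal M\to F$ with $p(m)+p(m')=\min_\alpha p(m+_\alpha m')$, $p(\lambda m)=\lambda p(m)$ ($\lambda\in F_{\ge 0}$), extended continuously and piecewise linearly to $\mathcal M_{\mathbb R}$; $\mathrm{Sp}(\mathcal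 M)$ is the set of points. For $p\in\mathrm{Sp}(\mathcal M)$, $a\in F$, the PL half-space is $\mathcal H_{p,a}=\{m\in\mathcal M_{\mathbb R}:p(m)\ge a\}$; the point-convex hull over $F$ of $S\subseteq\mathcal M_{\mathbb R}$ is $\mathrm{p\text{-}conv}_F(S)=\bigcap\{\mathcal H_{p,a}: p\in\mathrm{Sp}(\mathcal M),a\in F, S\subseteq\mathcal H_{p,a}\}$. $\langle\mathcal M\rangle$ is the free commutative idempotent semigroup (operation $\oplus$) on the elements of $\mathcal M$ modulo the relations $\bigoplus_{m\in S}m=\bigoplus_{m\in S'}m$ for finite $S,S'\subseteq\mathcal M$ with $\mathrm{p\text{-}conv}_F(S)=\mathrm{p\text{-}conv}_F(S')$, with a formally adjoined additive identity $\infty$. The product is $m_1\star m_2:=\bigoplus_{\alpha\in I}(m_1+_\alpha m_2)$ for $m_1,m_2\in\mathcal M$, $m\star\infty=\infty$, extended by distributivity over $\oplus$. *)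

From HB Require Import structures.
From mathcomp Require Import all_boot all_order all_algebra.
From mathcomp Require Import reals.
Set Implicit Arguments. Unset Strict Implicit. Unset Printing Implicit Defensive.
Import Order.TTheory GRing.Theory Num.Theory.
Local Open Scope ring_scope.

Section PolyptychDefs.
Variable R : realType.

Definition isSubringZ (F : R -> Prop) : Prop :=
  [/\ forall z : int, F (z%:~R),
      forall x y, F x -> F y -> F (x + y),
      forall x, F x -> F (- x) &
      forall x y, F x -> F y -> F (x * y)].

Variable r : nat.
Local Notation V := 'rV[R]_r.

(* F-points: the lattice M = F^r inside M ⊗ R = R^r. *)
Definition Fpt (F : R -> Prop) (v : V) : Prop := forall i, F (v ord0 i).

Definition cone (gs : seq V) : V -> Prop :=
  fun x => exists c : 'I_(size gs) -> R,
    (forall i, 0 <= c i) /\ x = \sum_(i < size gs) c i *: gs`_i.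

Definition isFace (tau sigma : V -> Prop) : Prop :=
  exists u : 'cV[R]_r,
    (forall x, sigma x -> 0 <= (x *m u) ord0 ord0) /\
    (forall x, tau x <-> (sigma x /\ (x *m u) ord0 ord0 = 0)).

Definition complete_fan (G : V -> Prop) (S : seq (seq V)) : Prop :=
  [/\ (forall gs, gs \in S -> forall g, g \in gs -> G g),
      (forall gs, gs \in S -> forall tau, isFace tau (cone gs) ->
          exists2 hs, hs \in S & forall x, tau x <-> cone hs x),
      (forall gs hs, gs \in S -> hs \in S ->
          isFace (fun x => cone gs x /\ cone hs x) (cone gs) /\
          isFace (fun x => cone gs x /\ cone hs x) (cone hs)) &
      (forall x, exists2 gs, gs \in S & cone gs x)].

(* piecewise F-linear map (given by its real extension): F-linear on each
   cone of some complete F-rational fan *)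
Definition pw_Flinear (F : R -> Prop) (f : V -> V) : Prop :=
  exists S, complete_fan (Fpt F) S /\
    forall gs, gs \in S -> exists A : 'M[R]_r,
      (forall i j, F (A i j)) /\ forall x, cone gs x -> f x = x *m A.

Definition pw_linear_fun (g : V -> R) : Prop :=
  exists S, complete_fan (fun _ => True) S /\
    forall gs, gs \in S -> exists u : 'cV[R]_r,
      forall x, cone gs x -> g x = (x *m u) ord0 ord0.

Variable I : finType.

(* mu a b : transition map M_a -> M_b (its real extension) *)
Definition polyptych (F : R -> Prop) (mu : I -> I -> V -> V) : Prop :=
  [/\ forall a b, pw_Flinear F (mu a b),
      forall a v, Fpt F v -> mu a a v = v,
      forall a b v, Fpt F v -> mu b a (mu a b v) = v &
      forall a b c v, Fpt F v -> mu b c (mu a b v) = mu a c v].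

(* an element of M (resp. M_R) is represented by a chart index and a vector *)
Definition elt := (I * V)%type.

Definition Felt (F : R -> Prop) (m : elt) : Prop := Fpt F m.2.

(* two representatives of the same element of M *)
Definition meq (mu : I -> I -> V -> V) (m m' : elt) : Prop :=
  mu m.1 m'.1 m.2 = m'.2.

Definition plus_chart (mu : I -> I -> V -> V) (a : I) (m m' : elt) : elt :=
  (a, mu m.1 a m.2 + mu m'.1 a m'.2).

(* points of M, given by their continuous piecewise-linear extension to M_R,
   described chartwise: p (a, v) = pt a v *)
Definition isPoint (F : R -> Prop) (mu : I -> I -> V -> V)
    (pt : I -> V -> R) : Prop :=
  [/\ (forall a b v, pt b (mu a b v) = pt a v),
      (forall a, pw_linear_fun (pt a)),
      (forall m, Felt F m -> F (pt m.1 m.2)),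
      (forall m m', Felt F m -> Felt F m' ->
         (forall a, pt m.1 m.2 + pt m'.1 m'.2
                      <= pt a (plus_chart mu a m m').2) /\
         (exists a, pt m.1 m.2 + pt m'.1 m'.2
                      = pt a (plus_chart mu a m m').2)) &
      (forall (l : R) m, F l -> 0 <= l -> Felt F m ->
         pt m.1 (l *: m.2) = l * pt m.1 m.2)].

Definition in_pconv (F : R -> Prop) (mu : I -> I -> V -> V)
    (S : seq elt) (x : elt) : Prop :=
  forall pt, isPoint F mu pt -> forall a, F a ->
    (forall m, m \in S -> a <= pt m.1 m.2) -> a <= pt x.1 x.2.

Definition pconv_eq F mu (S S' : seq elt) : Prop :=
  forall x, in_pconv F mu S x <-> in_pconv F mu S' x.

(* finite formal joins: nonempty lists of elements of M, taken as subsets *)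
Definition same_classes mu (s t : seq elt) : Prop :=
  (forall x, x \in s -> exists2 y, y \in t & meq mu x y) /\
  (forall y, y \in t -> exists2 x, x \in s & meq mu y x).

(* congruence on the free commutative idempotent semigroup generated by
   the relations  (+)_{S} m = (+)_{S'} m  whenever p-conv(S) = p-conv(S') *)
Inductive brel F mu : seq elt -> seq elt -> Prop :=
| brel_free s t : same_classes mu s t -> brel F mu s t
| brel_gen s t : pconv_eq F mu s t -> brel F mu s t
| brel_sym s t : brel F mu s t -> brel F mu t s
| brel_trans s t u : brel F mu s t -> brel F mu t u -> brel F mu s u
| brel_cat s s' t : brel F mu s s' -> brel F mu (s ++ t) (s' ++ t).

(* elements of <M>: None is the adjoined identity oo *)
Definition bracket := option (seq elt).

Definition valid_bracket F (x : bracket) : Prop :=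
  match x with
  | None => True
  | Some s => s <> [::] /\ forall m, m \in s -> Felt F m
  end.

Definition beq F mu (x y : bracket) : Prop :=
  match x, y with
  | None, None => True
  | Some s, Some t => brel F mu s t
  | _, _ => False
  end.

(* m1 * m2 = (+)_a (m1 +_a m2), extended by distributivity *)
Definition star_seq mu (s t : seq elt) : seq elt :=
  flatten [seq [seq plus_chart mu a x y | a <- enum I] | x <- s, y <- t].

Definition star mu (x y : bracket) : bracket :=
  match x, y with
  | Some s, Some t => Some (star_seq mu s t)
  | _, _ => None
  end.

End PolyptychDefs.

From HB Require Import structures.
From mathcomp Require Import all_boot all_order all_algebra.
From mathcomp Require Import reals.
Set Implicit Arguments. Unset Strict Implicit. Unset Printing Implicit Defensive.
Import Order.TTheory GRing.Theory Num.Theory.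
Local Open Scope ring_scope.

(* A point p satisfies [p m1 + p m2 <= p (m1 +_a m2)] for every chart a, with
   equality for some a, so the lower bounds of p on [m1 * m2] are exactly the
   lower bounds of [p m1 + p m2].  Hence both sides of the associativity law
   have, for every point p, the same lower bounds as [p m1 + p m2 + p m3], and
   thus the same point-convex hull.  Commutativity holds already for the sets
   of chart sums, since [m1 +_a m2 = m2 +_a m1]. *)

Section Star.
Variables (R : realType) (F : R -> Prop) (r : nat) (I : finType).
Variable mu : I -> I -> 'rV[R]_r -> 'rV[R]_r.
Hypotheses (HF : isSubringZ F) (HM : polyptych F mu).

Local Notation elt := (elt R r I).
Local Notation lower_bound pt a s := (forall m, m \in s -> a <= pt m.1 m.2).

Lemma Fpt_mu a b (v : 'rV[R]_r) : Fpt F v -> Fpt F (mu a b v).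
Proof.
move=> Fv i; case: HM => /(_ a b) [S [[_ _ _ coverS] linS]] _ _ _.
have [gs gsS v_gs] := coverS v; have [A [FA linA]] := linS gs gsS.
have F0 : F 0 by case: HF => /(_ 0) + _ _ _; rewrite mulr0z.
rewrite linA // mxE; case: HF => _ Fadd _ Fmul.
by apply: big_ind => // k _; apply: Fmul.
Qed.

Lemma Fpt_add (v w : 'rV[R]_r) : Fpt F v -> Fpt F w -> Fpt F (v + w).
Proof. by case: HF => _ Fadd _ _ Fv Fw i; rewrite mxE; apply: Fadd. Qed.

Lemma Felt_plus_chart a x y :
  Felt F x -> Felt F y -> Felt F (plus_chart mu a x y).
Proof. by move=> Fx Fy; apply: Fpt_add; apply: Fpt_mu. Qed.

Lemma mem_star_seq (s t : seq elt) m :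
  m \in star_seq mu s t <->
  exists x y a, [/\ x \in s, y \in t & m = plus_chart mu a x y].
Proof.
split.
  move/flattenP => [l /allpairsP [[x y] /= [xs yt ->]]] /mapP [a _ ->].
  by exists x, y, a.
move=> [x [y [a [xs yt ->]]]]; apply/flattenP.
exists [seq plus_chart mu b x y | b <- enum I]; first by apply/allpairsP; exists (x, y).
by apply/mapP; exists a; rewrite ?mem_enum.
Qed.

Lemma Felt_star_seq (s t : seq elt) :
  (forall x, x \in s -> Felt F x) -> (forall y, y \in t -> Felt F y) ->
  forall m, m \in star_seq mu s t -> Felt F m.
Proof.
move=> Fs Ft m /mem_star_seq [x [y [a [xs yt ->]]]].
by apply: Felt_plus_chart; [apply: Fs | apply: Ft].
Qed.

Lemma star_seqC (s t : seq elt) : star_seq mu s t =i star_seq mu t s.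
Proof.
suff sub u v m : m \in star_seq mu u v -> m \in star_seq mu v u.
  by move=> m; apply/idP/idP; apply: sub.
move=> /mem_star_seq [x [y [a [xu yv ->]]]]; apply/mem_star_seq.
by exists y, x, a; rewrite /plus_chart addrC.
Qed.

Lemma pconv_eq_lower_bound (s t : seq elt) :
  (forall pt, isPoint F mu pt -> forall a, lower_bound pt a s <-> lower_bound pt a t) ->
  pconv_eq F mu s t.
Proof.
by move=> lb_st x; split=> sx pt ptP a Fa lb; apply: sx => //; apply/(lb_st _ ptP).
Qed.

Section LowerBounds.
Variable pt : I -> 'rV[R]_r -> R.
Hypothesis ptP : isPoint F mu pt.

Lemma lower_bound_star_seq (s t : seq elt) a :
  (forall x, x \in s -> Felt F x) -> (forall y, y \in t -> Felt F y) ->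
  lower_bound pt a (star_seq mu s t) <->
  forall x y, x \in s -> y \in t -> a <= pt x.1 x.2 + pt y.1 y.2.
Proof.
case: ptP => _ _ _ ptD _ Fs Ft; split.
  move=> lb x y xs yt; have [_ [c ->]] := ptD x y (Fs x xs) (Ft y yt).
  by apply: (lb (plus_chart mu c x y)); apply/mem_star_seq; exists x, y, c.
move=> lb m /mem_star_seq [x [y [c [xs yt ->]]]].
exact: le_trans (lb x y xs yt) ((ptD x y (Fs x xs) (Ft y yt)).1 c).
Qed.

Lemma lower_bound_star_seqAl (s t u : seq elt) a :
  (forall x, x \in s -> Felt F x) -> (forall y, y \in t -> Felt F y) ->
  (forall z, z \in u -> Felt F z) ->
  lower_bound pt a (star_seq mu (star_seq mu s t) u) <->
  forall x y z, x \in s -> y \in t -> z \in u ->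
    a <= pt x.1 x.2 + pt y.1 y.2 + pt z.1 z.2.
Proof.
move=> Fs Ft Fu; rewrite lower_bound_star_seq //; last exact: Felt_star_seq.
split=> [lb x y z xs yt zu | lb w z ws zu].
  rewrite -lerBlDr; move: x y xs yt; apply/lower_bound_star_seq => // w ws.
  by rewrite lerBlDr; apply: lb.
rewrite -lerBlDr; move: w ws; apply/lower_bound_star_seq => // x y xs yt.
by rewrite lerBlDr; apply: lb.
Qed.

Lemma lower_bound_star_seqAr (s t u : seq elt) a :
  (forall x, x \in s -> Felt F x) -> (forall y, y \in t -> Felt F y) ->
  (forall z, z \in u -> Felt F z) ->
  lower_bound pt a (star_seq mu s (star_seq mu t u)) <->
  forall x y z, x \in s -> y \in t -> z \in u ->
    a <= pt x.1 x.2 + pt y.1 y.2 + pt z.1 z.2.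
Proof.
move=> Fs Ft Fu; rewrite lower_bound_star_seq //; last exact: Felt_star_seq.
split=> [lb x y z xs yt zu | lb x w xs wtu].
  rewrite -addrA -lerBlDl; move: y z yt zu; apply/lower_bound_star_seq => // w wtu.
  by rewrite lerBlDl; apply: lb.
rewrite -lerBlDl; move: w wtu; apply/lower_bound_star_seq => // y z yt zu.
by rewrite lerBlDl addrA; apply: lb.
Qed.

End LowerBounds.

Lemma star_seqA_pconv (s t u : seq elt) :
  (forall x, x \in s -> Felt F x) -> (forall y, y \in t -> Felt F y) ->
  (forall z, z \in u -> Felt F z) ->
  pconv_eq F mu (star_seq mu (star_seq mu s t) u) (star_seq mu s (star_seq mu t u)).
Proof.
move=> Fs Ft Fu; apply: pconv_eq_lower_bound => pt ptP a.
by rewrite lower_bound_star_seqAl // lower_bound_star_seqAr.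
Qed.

End Star.

Theorem mainTheorem6 (R : realType) (F : R -> Prop) (HF : isSubringZ F)
    (r : nat) (I : finType) (mu : I -> I -> 'rV[R]_r -> 'rV[R]_r)
    (HM : polyptych F mu) :
  (forall x y z : bracket R r I,
      valid_bracket F x -> valid_bracket F y -> valid_bracket F z ->
      beq F mu (star mu (star mu x y) z) (star mu x (star mu y z))) /\
  (forall x y : bracket R r I,
      valid_bracket F x -> valid_bracket F y ->
      beq F mu (star mu x y) (star mu y x)).
Proof.
split.
  case=> [s|] [t|] [u|] //= [_ Fs] [_ Ft] [_ Fu].
  by apply: brel_gen; apply: star_seqA_pconv.
case=> [s|] [t|] //= _ _; apply/brel_gen/pconv_eq_lower_bound => pt _ a.
by split=> lb m; rewrite star_seqC; apply: lb.
Qed.
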